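(* Let $r\ge 0$ and $\ell\ge 1$ be integers, let $G$ be a graph, and let $H$ be an $r$-shallow minor of $G\boxtimes K_\ell$. Then for every integer $s\ge 1$, $$\mathrm{scol}_s(H)\le \ell\,\mathrm{scol}_{2rs+2r+s}(G)\quad\text{and}\quad \mathrm{wcol}_s(H)\le \ell\,\mathrm{wcol}_{2rs+2r+s}(G).$$
   Context: Graphs are finite, simple, undirected. The strong product $G\boxtimes K_\ell$ has vertex set $V(G)\times[\ell]$ with distinct $(a,i),(b,j)$ adjacent iff $a=b$ or $ab\in E(G)$. A model of $H$ in $G'$ assigns to each $v\in V(H)$ a connected subgraph $\mu(v)$ of $G'$, pairwise vertex-disjoint, such that each edge $vw\in E(H)$ has an edge of $G'$ between $\mu(v)$ and $\mu(w)$; $H$ is an $r$-shallow minor of $G'$ if some model has all $\mu(v)$ of radius at most $r$. For a graph $G$, a total order $\preceq$ of $V(G)$, a vertex $v$ and an integer $s\ge1$: $R(G,\preceq,v,s)$ is the set of vertices $w$ for which there is a path $v=w_0,w_1,\dots,w_{s'}=w$ with $0\le s'\le s$, $w\preceq v$, and $v\prec w_i$ for all $i\in[s'-1]$; $Q(G,\preceq,v,s)$ is the set of vertices $w$ for which there is such a path with $w\preceq v$ and $w\prec w_i$ for all $i\in[s'-1]$. The $s$-strong colouring number $\mathrm{scol}_s(G)$ (resp. $s$-weak colouring number $\mathrm{wcol}_s(G)$) is the minimum over total orders $\preceq$ of $\max_v|R(G,\preceq,v,s)|$ (resp. $\max_v|Q(G,\preceq,v,s)|$). *)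

From mathcomp Require Import all_boot.
Set Implicit Arguments. Unset Strict Implicit. Unset Printing Implicit Defensive.

(* A (finite, simple, undirected) graph is a finType of vertices together with
   a symmetric irreflexive boolean adjacency relation; symmetry and
   irreflexivity are assumed as hypotheses in the theorem. *)

Definition strong_prod (T : finType) (e : rel T) (l : nat) : rel (T * 'I_l) :=
  fun x y => (x != y) && ((x.1 == y.1) || e x.1 y.1).
Arguments strong_prod {T} e l.

Definition radius_le (V : finType) (e : rel V) (A : {set V}) (r : nat) : Prop :=
  exists2 c, c \in A &
    forall x, x \in A -> exists p : seq V,
      [/\ path e c p, all (fun y => y \in A) p, last c p = x & size p <= r].

Definition shallow_minor (r : nat) (U V : finType) (eH : rel U) (e : rel V) : Prop :=
  exists mu : U -> {set V},
    [/\ forall u, radius_le e (mu u) r,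
        forall u w, u != w -> [disjoint mu u & mu w] &
        forall u w, eH u w -> exists2 a, a \in mu u & exists2 b, b \in mu w & e a b].

(* Total orders of V are represented by bijective ranks f : V -> 'I_#|V|,
   with w ⪯ v iff f w <= f v. *)
Definition is_order (V : finType) (f : {ffun V -> 'I_#|V|}) : bool := injectiveb f.

(* Paths v = w_0, w_1, ..., w_{s'} = w with s' <= s; p = [w_1; ...; w_{s'}],
   internal vertices are take s'.-1 p. *)
Definition Rset (V : finType) (e : rel V) (f : {ffun V -> 'I_#|V|}) (v : V) (s : nat)
  : {set V} :=
  [set w | [exists n : 'I_s.+1, [exists p : n.-tuple V,
     [&& path e v p, uniq (v :: p), last v p == w, f w <= f v &
         all (fun x => f v < f x) (take n.-1 p)]]]].

Definition Qset (V : finType) (e : rel V) (f : {ffun V -> 'I_#|V|}) (v : V) (s : nat)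
  : {set V} :=
  [set w | [exists n : 'I_s.+1, [exists p : n.-tuple V,
     [&& path e v p, uniq (v :: p), last v p == w, f w <= f v &
         all (fun x => f w < f x) (take n.-1 p)]]]].

Definition scol_ord (V : finType) (e : rel V) (f : {ffun V -> 'I_#|V|}) (s : nat) : nat :=
  \max_(v : V) #|Rset e f v s|.
Definition wcol_ord (V : finType) (e : rel V) (f : {ffun V -> 'I_#|V|}) (s : nat) : nat :=
  \max_(v : V) #|Qset e f v s|.

(* minimum over all total orders; #|V| is an upper bound of every value, so it
   is a neutral starting point for the minimum (and there is always at least
   one order). *)
Definition scol (V : finType) (e : rel V) (s : nat) : nat :=
  \big[minn/#|V|]_(f : {ffun V -> 'I_#|V|} | is_order f) scol_ord e f s.
Definition wcol (V : finType) (e : rel V) (s : nat) : nat :=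
  \big[minn/#|V|]_(f : {ffun V -> 'I_#|V|} | is_order f) wcol_ord e f s.

(* Let mu be a model of H in G ⊠ K_l with branch sets of radius at most r and
   fix an order of G.  Represent each vertex u of H by the least vertex m(u) of
   G (in that order) among the projections of mu(u), and order H compatibly
   with m.  A path of length s' <= s in H from v to w lifts to a walk of length
   at most 2r(s'+1) + s' through the branch sets along it, and its projection
   is a walk of G from m(v) to m(w) in which equal consecutive vertices are
   allowed.  If w is strongly reachable from v, the first vertex of this walk
   below m(v) cannot lie under the branch set of v or of an interior vertex, so
   mu(w) meets R(G, m(v), 2rs+2r+s) × [l]; if w is weakly reachable, the whole
   walk stays above m(w), so mu(w) meets Q(G, m(v), 2rs+2r+s) × [l].  As branch
   sets are disjoint, |R(H, v, s)| <= l |R(G, m(v), 2rs+2r+s)|, and likewise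
   for Q. *)

From mathcomp Require Import all_boot zify.
Set Implicit Arguments. Unset Strict Implicit. Unset Printing Implicit Defensive.

Definition reflc (V : eqType) (e : rel V) : rel V := fun a b => (a == b) || e a b.

Section PathSets.

Variables (V : finType) (e : rel V) (f : {ffun V -> 'I_#|V|}).

Lemma exists_tuple_leqP s (P : nat -> seq V -> bool) :
  reflect (exists2 p : seq V, size p <= s & P (size p) p)
          [exists n : 'I_s.+1, exists p : n.-tuple V, P n p].
Proof.
apply: (iffP existsP) => [[n /existsP[p Pp]]|[p ps Pp]].
  by exists (val p); rewrite size_tuple // -ltnS.
by exists (Ordinal (ps : size p < s.+1)); apply/existsP; exists (in_tuple p).
Qed.

Lemma RsetP v w s :
  reflect (exists2 p, size p <= s &
             [&& path e v p, uniq (v :: p), last v p == w, f w <= f v &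
                 all (fun x => f v < f x) (take (size p).-1 p)])
          (w \in Rset e f v s).
Proof.
rewrite inE; exact: (exists_tuple_leqP s (fun n p =>
  [&& path e v p, uniq (v :: p), last v p == w, f w <= f v &
      all (fun x => f v < f x) (take n.-1 p)])).
Qed.

Lemma QsetP v w s :
  reflect (exists2 p, size p <= s &
             [&& path e v p, uniq (v :: p), last v p == w, f w <= f v &
                 all (fun x => f w < f x) (take (size p).-1 p)])
          (w \in Qset e f v s).
Proof.
rewrite inE; exact: (exists_tuple_leqP s (fun n p =>
  [&& path e v p, uniq (v :: p), last v p == w, f w <= f v &
      all (fun x => f w < f x) (take n.-1 p)])).
Qed.

Lemma reflc_walk_shorten a q :
  path (reflc e) a q ->
  exists p, [/\ path e a p, uniq (a :: p), last a p = last a q, size p <= size q &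
    forall y, y \in take (size p).-1 p -> [/\ y \in q, y != a & y != last a q]].
Proof.
case/shortenP=> p pe uap pq; exists p; split => //.
- elim: p a pe uap {pq} => //= b p IHp a /andP[ab bp] /andP[ap up].
  rewrite IHp // andbT; case/orP: ab => // /eqP ab.
  by rewrite -ab inE eqxx in ap.
- by case/andP: uap => _ /uniq_leq_size; apply.
move=> y; case/lastP: p uap pq {pe} => [|p z] //.
rewrite size_rcons /= -cats1 take_size_cat // last_cat /= => /andP[ap up] pq yp.
split; first by apply: pq; rewrite mem_cat yp.
  by apply: contraNneq ap => <-; rewrite mem_cat yp.
by move: up; rewrite cats1 rcons_uniq => /andP[zp _]; apply: contraNneq zp => <-.
Qed.

Lemma Rset_walk a q k :
  path (reflc e) a q -> size q <= k -> f (last a q) <= f a ->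
  {in q, forall y, y != a -> y != last a q -> f a < f y} ->
  last a q \in Rset e f a k.
Proof.
move=> qe qk lqa qint; have [p [pe uap pl pq pint]] := reflc_walk_shorten qe.
apply/RsetP; exists p; first exact: leq_trans pq qk.
rewrite pe uap pl eqxx lqa; apply/allP => y /pint[yq ya yl].
exact: qint.
Qed.

Hypothesis f_inj : injective f.

Lemma Qset_walk a q k :
  path (reflc e) a q -> size q <= k -> f (last a q) <= f a ->
  {in q, forall y, f (last a q) <= f y} -> last a q \in Qset e f a k.
Proof.
move=> qe qk lqa qabove; have [p [pe uap pl pq pint]] := reflc_walk_shorten qe.
apply/QsetP; exists p; first exact: leq_trans pq qk.
rewrite pe uap pl eqxx lqa; apply/allP => y /pint[yq _ yl].
rewrite ltn_neqAle qabove // andbT.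
by apply: contra yl => /eqP/val_inj/f_inj ->.
Qed.

Lemma Rset_first_exit a q k :
  path (reflc e) a q -> size q <= k -> f (last a q) <= f a ->
  exists2 x, x \in Rset e f a k & x = last a q \/ x \in q /\ f x < f a.
Proof.
move=> qe qk; rewrite leq_eqVlt => /orP[/eqP/val_inj/f_inj la|lqa].
  by exists a; [apply: (@Rset_walk a [::]) | left].
pose below y := f y < f a.
have qbelow : has below q.
  apply/hasP; exists (last a q) => //.
  by have := mem_last a q; rewrite inE => /predU1P[la|//]; rewrite la ltnn in lqa.
pose i := find below q; pose x := nth a q i.
have iq : i < size q by rewrite -has_find.
have xbelow : below x by apply: nth_find.
have qi : take i.+1 q = rcons (take i q) x by rewrite (take_nth a).
exists x; last by right; rewrite mem_nth.
have <- : last a (take i.+1 q) = x by rewrite qi last_rcons.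
apply: Rset_walk.
- exact: take_path qe.
- by rewrite size_take_min geq_min qk orbT.
- by rewrite qi last_rcons ltnW.
rewrite qi last_rcons => y; rewrite mem_rcons inE => /predU1P[-> /[!eqxx] //|yq ya _].
have /hasPn/(_ y yq) : ~~ has below (take i q) by rewrite has_take // ltnn.
rewrite /below -leqNgt leq_eqVlt => /orP[/eqP/val_inj/f_inj ay|//].
by rewrite ay eqxx in ya.
Qed.

End PathSets.

Lemma mem_path_interior (V : eqType) (v u : V) p :
  u \in v :: p -> [\/ u = v, u \in take (size p).-1 p | u = last v p].
Proof.
rewrite inE => /predU1P[->|]; first by constructor 1.
case/lastP: p => [|p z] //; rewrite mem_rcons inE size_rcons /= last_rcons.
by rewrite -cats1 take_size_cat // => /predU1P[->|]; [constructor 3 | constructor 2].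
Qed.

Section ModelWalk.

Variables (U V : finType) (eH : rel U) (e : rel V) (mu : U -> {set V}) (r : nat).
Hypothesis e_sym : symmetric e.

Lemma radius_le_walk (A : {set V}) y z :
  radius_le e A r -> y \in A -> z \in A ->
  exists p, [/\ path e y p, last y p = z, size p <= 2 * r & {subset p <= A}].
Proof.
move=> [c cA reach] yA zA.
have [py [pye pyA <- pyr]] := reach y yA; have [pz [pze pzA <- pzr]] := reach z zA.
have lc : last (last c py) (rev (belast c py)) = c.
  by case: py {pye pyA pyr} => //= x py; rewrite rev_cons last_rcons.
exists (rev (belast c py) ++ pz); split.
- by rewrite cat_path rev_path -(eq_path e_sym) pye lc.
- by rewrite last_cat lc.
- by rewrite size_cat size_rev size_belast mul2n -addnn leq_add.
move=> x; rewrite mem_cat mem_rev => /orP[/mem_belast|/(allP pzA)//].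
by rewrite inE => /predU1P[->|/(allP pyA)].
Qed.

Hypothesis mu_radius : forall u, radius_le e (mu u) r.
Hypothesis mu_edge :
  forall u w, eH u w -> exists2 a, a \in mu u & exists2 b, b \in mu w & e a b.

Lemma model_walk v q y z :
  path eH v q -> y \in mu v -> z \in mu (last v q) ->
  exists p, [/\ path e y p, last y p = z,
                size p <= 2 * r * size q + 2 * r + size q &
                forall x, x \in p -> exists2 u, u \in v :: q & x \in mu u].
Proof.
elim: q v y => [|u q IHq] v y /= => [_ yv zv|/andP[vu uq] yv zq].
  have [p [pe pl pr pv]] := radius_le_walk (mu_radius v) yv zv.
  by exists p; split; rewrite ?muln0 ?addn0 // => x /pv xv; exists v; rewrite ?mem_head.
have [a av [b bu ab]] := mu_edge vu.
have [p1 [p1e p1l p1r p1v]] := radius_le_walk (mu_radius v) yv av.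
have [p2 [p2e p2l p2r p2u]] := IHq u b uq bu zq.
exists (p1 ++ b :: p2); split.
- by rewrite cat_path p1e p1l /= ab.
- by rewrite last_cat p1l.
- by rewrite size_cat /=; nia.
move=> x; rewrite mem_cat inE => /or3P[/p1v xv|/eqP->|/p2u[w wq xw]].
- by exists v; rewrite ?mem_head.
- by exists u; rewrite // !inE eqxx orbT.
- by exists w; rewrite // inE wq orbT.
Qed.

End ModelWalk.

Lemma strong_prod_sym (T : finType) (e : rel T) l :
  symmetric e -> symmetric (strong_prod e l).
Proof. by move=> e_sym x y; rewrite /strong_prod eq_sym e_sym [y.1 == _]eq_sym. Qed.

Lemma strong_prod_path_fst (T : finType) (e : rel T) l y p :
  path (strong_prod e l) y p -> path (reflc e) y.1 (map fst p).
Proof.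
by elim: p y => //= z p IHp y /andP[/andP[_ yz] /IHp ->]; rewrite andbT.
Qed.

Lemma leq_card_disjoint_meet (U V : finType) (mu : U -> {set V})
    (A : {set U}) (X : {set V}) :
  (forall u w, u != w -> [disjoint mu u & mu w]) ->
  (forall w, w \in A -> exists2 y, y \in mu w & y \in X) -> #|A| <= #|X|.
Proof.
move=> mu_disj meetX; pose g w := [pick y in mu w :&: X].
have gA w : w \in A -> exists2 y, g w = Some y & y \in mu w :&: X.
  case/meetX=> y yw yX; rewrite /g; case: pickP => [y' ?|/(_ y)]; first by exists y'.
  by rewrite inE yw yX.
have g_inj : {in A &, injective g}.
  move=> u w /gA[y -> /setIP[yu _]] /gA[y' -> /setIP[y'w _]] [yy'].
  apply/eqP; apply: contraTT yu => uw.
  by rewrite yy' (disjointFl (mu_disj _ _ uw) y'w).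
rewrite -(card_in_imset g_inj) -(card_imset X (@Some_inj _)).
apply/subset_leq_card/subsetP => _ /imsetP[w /gA[y -> /setIP[_ yX]] ->].
exact: imset_f.
Qed.

Lemma leq_card_strong_prod_meet (T U : finType) l (mu : U -> {set T * 'I_l})
    (A : {set U}) (B : {set T}) :
  (forall u w, u != w -> [disjoint mu u & mu w]) ->
  (forall w, w \in A -> exists2 y, y \in mu w & y.1 \in B) -> #|A| <= l * #|B|.
Proof.
move=> mu_disj meetB; rewrite mulnC -[l]card_ord -cardsT -cardsX.
apply: (leq_card_disjoint_meet mu_disj) => w /meetB[y yw yB].
by exists y; rewrite // inE yB in_setT.
Qed.

Lemma exists_order_refining (U : finType) (key : U -> nat) :
  exists2 f : {ffun U -> 'I_#|U|}, is_order f &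
    forall a b, f a <= f b -> key a <= key b.
Proof.
pose le := [rel a b | key a <= key b].
pose s := sort le (enum U).
have s_all u : u \in s by rewrite mem_sort mem_enum.
have idx u : index u s < #|U| by rewrite cardE -(size_sort le) index_mem.
exists [ffun u => Ordinal (idx u)].
  by apply/injectiveP => a b; rewrite !ffunE => -[]; apply: index_inj.
have le_trans : transitive le by move=> ? ? ?; apply: leq_trans.
have s_sorted : sorted le s by apply: sort_sorted => x y; apply: leq_total.
move=> a b; rewrite !ffunE.
exact: (sorted_leq_index le_trans (fun x => leqnn (key x)) s_sorted).
Qed.

Lemma exists_min_rep (U V : finType) (mu : U -> {set V}) (key : V -> nat) :
  (forall u, exists y, y \in mu u) ->
  exists2 rep : U -> V, forall u, rep u \in mu u &
    forall u y, y \in mu u -> key (rep u) <= key y.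
Proof.
move=> mu_ne.
suff /fin_all_exists2[rep rep_mu rep_min] :
    forall u, exists2 z, z \in mu u & forall y, y \in mu u -> key z <= key y.
  by exists rep.
by move=> u; have [y yu] := mu_ne u; case: (arg_minnP key yu) => z; exists z.
Qed.

Section ColouringTransfer.

Variables (r l s : nat) (T U : finType) (eG : rel T) (eH : rel U).
Variable mu : U -> {set T * 'I_l}.
Hypothesis eG_sym : symmetric eG.
Hypothesis mu_radius : forall u, radius_le (strong_prod eG l) (mu u) r.
Hypothesis mu_disj : forall u w, u != w -> [disjoint mu u & mu w].
Hypothesis mu_edge : forall u w, eH u w ->
  exists2 a, a \in mu u & exists2 b, b \in mu w & strong_prod eG l a b.

Variable f : {ffun T -> 'I_#|T|}.
Hypothesis f_inj : injective f.
Variable rep : U -> T * 'I_l.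
Hypothesis rep_mu : forall u, rep u \in mu u.
Hypothesis rep_min : forall u y, y \in mu u -> f (rep u).1 <= f y.1.
Variable f' : {ffun U -> 'I_#|U|}.
Hypothesis f'_refines : forall a b, f' a <= f' b -> f (rep a).1 <= f (rep b).1.

Let k := 2 * r * s + 2 * r + s.

Lemma model_path_proj v p :
  path eH v p -> size p <= s ->
  exists q, [/\ path (reflc eG) (rep v).1 q,
                last (rep v).1 q = (rep (last v p)).1, size q <= k &
                forall x, x \in q ->
                  exists2 u, u \in v :: p & exists2 y, y \in mu u & y.1 = x].
Proof.
move=> vp ps.
have [q [qe ql qsize qmu]] := model_walk (strong_prod_sym (l := l) eG_sym)
  mu_radius mu_edge vp (rep_mu v) (rep_mu (last v p)).
exists (map fst q); split.
- exact: strong_prod_path_fst qe.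
- by rewrite last_map ql.
- by rewrite size_map (leq_trans qsize) /k //; nia.
move=> _ /mapP[y yq ->]; have [u up yu] := qmu y yq.
by exists u => //; exists y.
Qed.

Lemma Rset_model_meet v w :
  w \in Rset eH f' v s -> exists2 y, y \in mu w & y.1 \in Rset eG f (rep v).1 k.
Proof.
case/RsetP=> p ps /and5P[vp _ /eqP pw wv pint].
have [q [qe ql qk qmu]] := model_path_proj vp ps; rewrite pw in ql.
have qv : f (last (rep v).1 q) <= f (rep v).1 by rewrite ql f'_refines.
have [x xR [xl|[xq xv]]] := Rset_first_exit f_inj qe qk qv.
  by exists (rep w); rewrite ?rep_mu // -ql -xl.
have [u up [y yu yx]] := qmu x xq.
have [uw|uw] := eqVneq u w; first by exists y; rewrite -?uw // yx.
suff: f (rep v).1 <= f (rep u).1.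
  by move/leq_trans/(_ (rep_min yu)); rewrite yx leqNgt xv.
case: (mem_path_interior up) => [->//|ui|ul]; last by rewrite ul pw eqxx in uw.
exact/f'_refines/ltnW/(allP pint).
Qed.

Lemma Qset_model_meet v w :
  w \in Qset eH f' v s -> exists2 y, y \in mu w & y.1 \in Qset eG f (rep v).1 k.
Proof.
case/QsetP=> p ps /and5P[vp _ /eqP pw wv pint].
have [q [qe ql qk qmu]] := model_path_proj vp ps; rewrite pw in ql.
exists (rep w) => //; rewrite -ql; apply: (Qset_walk f_inj) => //.
  by rewrite ql f'_refines.
move=> x /qmu[u up [y yu <-]]; rewrite ql (leq_trans _ (rep_min yu)) //.
case: (mem_path_interior up) => [->|ui|->]; rewrite ?pw //; first exact: f'_refines.
exact/f'_refines/ltnW/(allP pint).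
Qed.

Lemma scol_ord_model : scol_ord eH f' s <= l * scol_ord eG f k.
Proof.
apply/bigmax_leqP => v _.
apply: leq_trans (leq_card_strong_prod_meet mu_disj (@Rset_model_meet v)) _.
by rewrite leq_mul2l [_ <= scol_ord _ _ _](leq_bigmax (rep v).1) orbT.
Qed.

Lemma wcol_ord_model : wcol_ord eH f' s <= l * wcol_ord eG f k.
Proof.
apply/bigmax_leqP => v _.
apply: leq_trans (leq_card_strong_prod_meet mu_disj (@Qset_model_meet v)) _.
by rewrite leq_mul2l [_ <= wcol_ord _ _ _](leq_bigmax (rep v).1) orbT.
Qed.

End ColouringTransfer.

Lemma bigmin_le_cond (I : finType) (P : pred I) (F : I -> nat) x0 i :
  P i -> \big[minn/x0]_(j | P j) F j <= F i.
Proof.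
move=> Pi; have : i \in index_enum I by rewrite mem_index_enum.
elim: (index_enum I) => //= j js IHjs; rewrite inE big_cons => /predU1P[<-|/IHjs].
  by rewrite Pi geq_minl.
by case: (P j) => // le_i; rewrite geq_min le_i orbT.
Qed.

Lemma bigmin_order_transfer (T U : finType) l
    (cH : {ffun U -> 'I_#|U|} -> nat) (cG : {ffun T -> 'I_#|T|} -> nat) :
  #|U| <= l * #|T| ->
  (forall f, is_order f -> exists2 f', is_order f' & cH f' <= l * cG f) ->
  \big[minn/#|U|]_(f' | is_order f') cH f' <= l * \big[minn/#|T|]_(f | is_order f) cG f.
Proof.
move=> UT transfer; apply: (big_ind (fun m => _ <= l * m)).
- apply: leq_trans UT; elim/big_rec: _ => // f m _ mU.
  by rewrite geq_min mU orbT.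
- by move=> a b; rewrite /minn; case: ifP.
by move=> f /transfer[f' f'_order]; apply: leq_trans (bigmin_le_cond _ _ f'_order).
Qed.

Theorem theorem18 (r l : nat) (T U : finType) (eG : rel T) (eH : rel U) :
  symmetric eG -> irreflexive eG -> symmetric eH -> irreflexive eH ->
  0 < l ->
  shallow_minor r eH (strong_prod eG l) ->
  forall s : nat, 0 < s ->
    scol eH s <= l * scol eG (2 * r * s + 2 * r + s) /\
    wcol eH s <= l * wcol eG (2 * r * s + 2 * r + s).
Proof.
move=> eG_sym _ _ _ _ [mu [mu_radius mu_disj mu_edge]] s _.
have mu_ne u : exists y, y \in mu u by have [c cu _] := mu_radius u; exists c.
have UT : #|U| <= l * #|T|.
  rewrite -cardsT -[#|T|]cardsT; apply: (leq_card_strong_prod_meet mu_disj) => w _.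
  by have [y yw] := mu_ne w; exists y; rewrite ?inE.
have transfer f : is_order f -> exists f' : {ffun U -> 'I_#|U|},
    [/\ is_order f', scol_ord eH f' s <= l * scol_ord eG f (2 * r * s + 2 * r + s)
                   & wcol_ord eH f' s <= l * wcol_ord eG f (2 * r * s + 2 * r + s)].
  move=> /injectiveP f_inj.
  have [rep rep_mu rep_min] := exists_min_rep (fun y => f y.1) mu_ne.
  have [f' f'_order f'_refines] := exists_order_refining (fun u => f (rep u).1).
  exists f'; split => //.
  - exact: scol_ord_model f'_refines.
  - exact: wcol_ord_model f'_refines.
by split; apply: bigmin_order_transfer UT _ => f /transfer[f' [? ? ?]]; exists f'.
Qed.
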